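(* Let $\Gamma$ be a Deza graph with parameters $(n,k,k-1,a)$, $k>1$, $\beta=1$. For any $NA$-vertex $x$ and any vertex $y\in N(x,x')$, the vertex $y_b$ also belongs to $N(x,x')$.
   Context: A Deza graph with parameters $(n,k,b,a)$, $a\le b$, is a $k$-regular graph on $n$ vertices in which any two distinct vertices have $a$ or $b$ common neighbours; $\beta$ is the number of vertices $u\ne v$ with exactly $b$ common neighbours with a given vertex $v$. Since $\beta=1$, for each vertex $x$ let $x_b$ denote the unique vertex having $b=k-1$ common neighbours with $x$. A vertex $x$ is an $A$-vertex if $x$ is adjacent to $x_b$, and an $NA$-vertex otherwise. $N(x,y)$ is the set of common neighbours of $x$ and $y$. For an $NA$-vertex $x$, $x'$ denotes the unique neighbour of $x$ not adjacent to $x_b$. *)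

From mathcomp Require Import all_boot.
Set Implicit Arguments. Unset Strict Implicit. Unset Printing Implicit Defensive.

Definition simple_graph (T : finType) (e : rel T) : Prop :=
  symmetric e /\ irreflexive e.

Definition nbhd (T : finType) (e : rel T) (x : T) : {set T} := [set y | e x y].
Definition cnbhd (T : finType) (e : rel T) (x y : T) : {set T} :=
  nbhd e x :&: nbhd e y.

Definition deza_graph (T : finType) (e : rel T) (n k b a : nat) : Prop :=
  [/\ simple_graph e, #|T| = n, a <= b,
      (forall x, #|nbhd e x| = k) &
      (forall x y, x != y -> #|cnbhd e x y| = a \/ #|cnbhd e x y| = b)].

Definition b_partner (T : finType) (e : rel T) (b : nat) (v u : T) : bool :=
  (u != v) && (#|cnbhd e v u| == b).

Definition beta (T : finType) (e : rel T) (b : nat) (v : T) : nat :=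
  #|[set u | b_partner e b v u]|.

From mathcomp Require Import all_boot zify.
Set Implicit Arguments. Unset Strict Implicit. Unset Printing Implicit Defensive.

(* Since |N(u)| = k and |N(u, u_b)| = k - 1, every vertex u has exactly one
   neighbour not adjacent to u_b, and every pair u, v with v distinct from u
   and u_b has exactly a common neighbours.  A vertex y of N(x, x') is adjacent to x_b,
   and comparing N(x_b, y) with N(x, y) minus x' (two sets of size a) yields a
   common neighbour t of x_b and y not adjacent to x.  If y_b were not adjacent
   to x', then N(x, y_b) would be contained in, hence equal to, N(x_b, y_b),
   which contains t.  If y_b were not adjacent to x, then both y_b and t would
   be the neighbour of x_b not adjacent to x, so y ~ y_b; but then y would have
   two neighbours, x and y_b, not adjacent to y_b. *)

Lemma in_nbhd (T : finType) (e : rel T) (u v : T) : (v \in nbhd e u) = e u v.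
Proof. by rewrite inE. Qed.

Lemma in_cnbhd (T : finType) (e : rel T) (u v w : T) :
  (w \in cnbhd e u v) = e u w && e v w.
Proof. by rewrite inE !in_nbhd. Qed.

Lemma b_partner_sym (T : finType) (e : rel T) (b : nat) (u v : T) :
  b_partner e b u v -> b_partner e b v u.
Proof. by rewrite /b_partner /cnbhd setIC eq_sym. Qed.

Lemma b_partner_card (T : finType) (e : rel T) (b : nat) (u v : T) :
  b_partner e b u v -> #|cnbhd e u v| = b.
Proof. by case/andP=> _ /eqP. Qed.

Lemma b_partner_unique (T : finType) (e : rel T) (b : nat) (v u1 u2 : T) :
  beta e b v = 1 -> b_partner e b v u1 -> b_partner e b v u2 -> u1 = u2.
Proof.
move=> /eqP/cards1P[z def] p1 p2.
have: u1 \in [set u | b_partner e b v u] by rewrite inE.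
have: u2 \in [set u | b_partner e b v u] by rewrite inE.
by rewrite def !inE => /eqP-> /eqP->.
Qed.

Lemma b_partner_inj (T : finType) (e : rel T) (b : nat) (u1 u2 w : T) :
  beta e b w = 1 -> b_partner e b u1 w -> b_partner e b u2 w -> u1 = u2.
Proof. by move=> beta1 /b_partner_sym p1 /b_partner_sym; apply: b_partner_unique. Qed.

Lemma setD_eq_set1 (T : finType) (A B : {set T}) (w : T) :
  #|A :&: B| = #|A| - 1 -> w \in A :\: B -> A :\: B = [set w].
Proof.
move=> cardAB wAB.
have /cards1P[z defAB] : #|A :\: B| == 1.
  have: 0 < #|A| by apply/card_gt0P; exists w; case/setDP: wAB.
  by have := cardsID B A; lia.
by move: wAB; rewrite defAB inE => /eqP->.
Qed.

Section DezaBetaOne.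

Variables (T : finType) (e : rel T) (k a : nat).
Hypothesis adjC : symmetric e.
Hypothesis adj_irr : irreflexive e.
Hypothesis regular : forall u, #|nbhd e u| = k.
Hypothesis two_values :
  forall u v, u != v -> #|cnbhd e u v| = a \/ #|cnbhd e u v| = k - 1.
Hypothesis beta1 : forall u, beta e (k - 1) u = 1.

Local Notation partner := (b_partner e (k - 1)).

Lemma partner_adj (u v w w' : T) :
  partner u v -> e u w -> ~~ e v w -> e u w' -> w' != w -> e v w'.
Proof.
move=> /b_partner_card cuv uw vw uw' w'w.
have cardI : #|nbhd e u :&: nbhd e v| = #|nbhd e u| - 1 by rewrite regular.
have wD : w \in nbhd e u :\: nbhd e v by rewrite inE !in_nbhd uw vw.
apply/negPn/negP=> vw'.
have: w' \in nbhd e u :\: nbhd e v by rewrite inE !in_nbhd uw' vw'.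
by rewrite (setD_eq_set1 cardI wD) inE (negbTE w'w).
Qed.

Lemma card_cnbhd_other (u w v : T) :
  partner u w -> v != u -> v != w -> #|cnbhd e u v| = a.
Proof.
move=> puw vu vw.
case: (two_values (u := u) (v := v) _) => [|//|cuv]; first by rewrite eq_sym.
have puv : partner u v by rewrite /b_partner vu cuv eqxx.
by move: vw; rewrite (b_partner_unique (beta1 u) puv puw) eqxx.
Qed.

Section NAVertex.

Variables x xb x' y yb : T.
Hypotheses (pxb : partner x xb) (nxxb : ~~ e x xb).
Hypotheses (xx' : e x x') (nx'xb : ~~ e x' xb).
Hypotheses (xy : e x y) (x'y : e x' y) (pyb : partner y yb).

Let pxbx : partner xb x := b_partner_sym pxb.
Let nxbx' : ~~ e xb x'.
Proof. by rewrite adjC. Qed.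

Let y_neq_x : y != x.
Proof. by apply: contraTneq xy => ->; rewrite adj_irr. Qed.

Let y_neq_xb : y != xb.
Proof. by apply: contraTneq xy => ->. Qed.

Let yb_neq_x : yb != x.
Proof.
apply: contraNneq y_neq_xb => yb_x; apply/eqP.
by apply: (b_partner_inj (beta1 x) _ pxbx); rewrite -yb_x.
Qed.

Let yb_neq_xb : yb != xb.
Proof.
apply: contraNneq y_neq_x => yb_xb; apply/eqP.
by apply: (b_partner_inj (beta1 xb) _ pxb); rewrite -yb_xb.
Qed.

Lemma adj_xb_y : e xb y.
Proof.
apply: partner_adj pxb xx' nxbx' xy _.
by apply: contraTneq x'y => ->; rewrite adj_irr.
Qed.

Lemma exists_cnbhd_xb_y_notin_nbhd_x : exists2 t, t \in cnbhd e xb y & ~~ e x t.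
Proof.
suff /subsetPn[t tC] : ~~ (cnbhd e xb y \subset nbhd e x).
  by rewrite in_nbhd; exists t.
apply/negP=> sub_x.
have sub : cnbhd e xb y \subset cnbhd e x y.
  apply/subsetP=> z zC; have := subsetP sub_x z zC.
  by move: zC; rewrite in_nbhd !in_cnbhd => /andP[_ ->] ->.
have eq_card : #|cnbhd e xb y| = #|cnbhd e x y|.
  by rewrite (card_cnbhd_other pxbx) ?(card_cnbhd_other pxb).
have /(subset_cardP eq_card) eqC := sub.
by move: (eqC x'); rewrite !in_cnbhd xx' (adjC y) x'y (negbTE nxbx').
Qed.

Lemma adj_x'_yb : e x' yb.
Proof.
apply/negPn/negP; rewrite adjC => nybx'.
have [t] := exists_cnbhd_xb_y_notin_nbhd_x; rewrite in_cnbhd => /andP[xbt yt] nxt.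
have t_neq_x' : t != x' by apply: contraNneq nxt => ->.
have ybt : e yb t by apply: partner_adj pyb _ nybx' yt t_neq_x'; rewrite adjC.
have sub : cnbhd e x yb \subset cnbhd e xb yb.
  apply/subsetP=> z; rewrite !in_cnbhd => /andP[xz ybz]; rewrite ybz andbT.
  by apply: partner_adj pxb xx' nxbx' xz _; apply: contraNneq nybx' => <-.
have eq_card : #|cnbhd e x yb| = #|cnbhd e xb yb|.
  by rewrite (card_cnbhd_other pxb) ?(card_cnbhd_other pxbx).
have /(subset_cardP eq_card) eqC := sub.
by move: (eqC t); rewrite !in_cnbhd xbt ybt (negbTE nxt).
Qed.

Lemma adj_x_yb : e x yb.
Proof.
apply/negPn/negP => nxyb; have nybx : ~~ e yb x by rewrite adjC.
have yx : e y x by rewrite adjC.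
have [t] := exists_cnbhd_xb_y_notin_nbhd_x; rewrite in_cnbhd => /andP[xbt yt] nxt.
have xbyb : e xb yb.
  rewrite adjC; apply: partner_adj pyb yx nybx _ _; first by rewrite adjC adj_xb_y.
  by case/andP: pxb.
have t_eq_yb : t = yb.
  by apply/eqP/negPn/negP => tyb; move: nxt; rewrite (partner_adj pxbx xbyb nxyb xbt tyb).
have yyb : e y yb by rewrite -t_eq_yb.
by move: (partner_adj pyb yx nybx yyb yb_neq_x); rewrite adj_irr.
Qed.

End NAVertex.

End DezaBetaOne.

Theorem lemma7 (T : finType) (e : rel T) (n k a : nat) :
  deza_graph e n k (k - 1) a -> 1 < k ->
  (forall v, beta e (k - 1) v = 1) ->
  forall x xb x' : T,
    b_partner e (k - 1) x xb -> ~~ e x xb ->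
    e x x' -> ~~ e x' xb ->
    forall y yb : T, y \in cnbhd e x x' ->
      b_partner e (k - 1) y yb ->
      yb \in cnbhd e x x'.
Proof.
case=> -[adjC adj_irr] _ _ regular two_values _ beta1 x xb x' pxb nxxb xx' nx'xb y yb.
rewrite !in_cnbhd => /andP[xy x'y] pyb.
rewrite (adj_x_yb adjC adj_irr regular two_values beta1 pxb nxxb xx' nx'xb xy x'y pyb).
exact: (adj_x'_yb adjC adj_irr regular two_values beta1 pxb nxxb xx' nx'xb xy x'y pyb).
Qed.
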